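(* Let $c>0$ and $0<p<1$, and let $(p_n)$ be the symmetric orthonormal polynomials with recursion coefficients $\gamma_n=c(n+1)^p$. Then for every $\omega\in\mathbb{R}$, \[ 0<\lim_{n\to\infty}\frac{\sum_{k=0}^n p_k^2(\omega)}{(n+1)^{1-p}}<\infty, \] and the convergence of the limit is uniform on every compact subset of $\mathbb{R}$.
   Context: Given positive reals $\gamma_n>0$ ($n\ge0$), set $\gamma_{-1}=1$, $p_{-1}(\omega)=0$, $p_0(\omega)=1$, and define polynomials by $\gamma_n p_{n+1}(\omega)=\omega p_n(\omega)-\gamma_{n-1}p_{n-1}(\omega)$ for $n\ge 0$. *)

From Stdlib Require Export Reals.
Open Scope R_scope.

(* opair g w n = (p_n(w), p_{n+1}(w)) for the recursion
   g n * p_{n+1} = w p_n - g (n-1) p_{n-1}, with g(-1) = 1, p_{-1} = 0, p_0 = 1. *)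
Fixpoint opair (g : nat -> R) (w : R) (n : nat) : R * R :=
  match n with
  | O => (1, w / g O)
  | S m => let '(a, b) := opair g w m in (b, (w * b - g m * a) / g (S m))
  end.

Definition orthpoly (g : nat -> R) (n : nat) (w : R) : R := fst (opair g w n).

Definition gam (c p : R) (n : nat) : R := c * Rpower (INR n + 1) p.

Definition sqsum (g : nat -> R) (n : nat) (w : R) : R :=
  sum_f_R0 (fun k => (orthpoly g k w) ^ 2) n.

From Stdlib Require Import Reals Lra Lia Psatz ClassicalEpsilon.
Open Scope R_scope.

(* Write [x_n = p_n(w)] and [g_n = c (n+1)^p].  The energy
   [K_n = g_n (x_n^2 + x_(n+1)^2) - w x_n x_(n+1) + (g_(n+1) - g_n) x_(n+1)^2]
   is positive once [g_n >= |w|], and since the increments of [g] decrease to 0 while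
   [g] grows, [|K_(n+1) - K_n| <= (tau_n - tau_(n+1)) K_(n+1)] for a nonincreasing
   [tau_n -> 0] depending on [w] only through a bound [M >= |w|].  Hence [K_n] converges
   to some [k(w) > 0], with [|k(w) - K_n| = O(tau_n)] uniformly for [|w| <= M].  As
   [K_n] differs from [g_n (x_n^2 + x_(n+1)^2)] by [O(x_n^2 + x_(n+1)^2) = O(1/g_n)],
   this gives [x_n^2 + x_(n+1)^2 = k(w)/g_n + o(1/g_n)]; summing,
   [2 sum_(k<=n) x_k^2 ~ k(w) sum_(k<=n) 1/g_k ~ k(w) (n+1)^(1-p) / (c (1-p))]. *)

Lemma Rdiv_nonneg_pos (a b : R) : 0 <= a -> 0 < b -> 0 <= a / b.
Proof. intros ha hb. apply Rmult_le_pos; [exact ha | left; apply Rinv_0_lt_compat, hb]. Qed.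

Lemma Rpower_pos (x r : R) : 0 < Rpower x r.
Proof. apply exp_pos. Qed.

Lemma Rpower_1_l (r : R) : Rpower 1 r = 1.
Proof. unfold Rpower. rewrite ln_1, Rmult_0_r. apply exp_0. Qed.

Lemma Rpower_one_minus (t r : R) : 0 < t -> Rpower t (1 - r) = t / Rpower t r.
Proof.
  intro ht. unfold Rminus. rewrite Rpower_plus, Rpower_1, Rpower_Ropp by exact ht.
  reflexivity.
Qed.

(* Concavity of [s |-> s^r] at [s = 1]; with [E = exp (r ln s)], combine
   [1 + x <= exp x] at [x = (1-r) ln s] and at [x = - r ln s]. *)
Lemma Rpower_le_bernoulli (s r : R) : 0 < s -> 0 <= r <= 1 -> Rpower s r <= 1 + r * (s - 1).
Proof.
  intros hs hr. unfold Rpower.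
  rewrite <- (exp_ln s) at 2 by exact hs.
  set (L := ln s). set (E := exp (r * L)).
  assert (hE : 0 < E) by apply exp_pos.
  assert (hsplit : exp L = E * exp ((1 - r) * L)).
  { unfold E. rewrite <- exp_plus. f_equal. ring. }
  assert (hone : 1 = E * exp (- (r * L))).
  { unfold E. rewrite <- exp_plus, Rplus_opp_r. symmetry. apply exp_0. }
  pose proof (exp_ineq1_le ((1 - r) * L)).
  pose proof (exp_ineq1_le (- (r * L))).
  assert (E * (1 + (1 - r) * L) <= exp L) by (rewrite hsplit; apply Rmult_le_compat_l; lra).
  assert (E * (1 + - (r * L)) <= 1) by (rewrite hone at 2; apply Rmult_le_compat_l; lra).
  nra.
Qed.

Lemma Rpower_succ_sub_le (t r : R) : 1 <= t -> 0 <= r <= 1 ->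
  Rpower (t + 1) r - Rpower t r <= r * Rpower t r / t.
Proof.
  intros ht hr.
  assert (hinv : 0 < / t) by (apply Rinv_0_lt_compat; lra).
  replace (t + 1) with (t * (1 + / t)) by (field; lra).
  rewrite <- Rpower_mult_distr by lra.
  pose proof (Rpower_le_bernoulli (1 + / t) r ltac:(lra) hr).
  pose proof (Rpower_pos t r).
  replace (r * Rpower t r / t) with (Rpower t r * (r * (1 + / t - 1))) by (field; lra).
  nra.
Qed.

Lemma Rpower_sub_pred_ge (t r : R) : 1 < t -> 0 <= r <= 1 ->
  r * Rpower t r / t <= Rpower t r - Rpower (t - 1) r.
Proof.
  intros ht hr.
  assert (hinv : 0 < / t < 1).
  { split; [apply Rinv_0_lt_compat; lra|].
    rewrite <- Rinv_1. apply Rinv_lt_contravar; lra. }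
  replace (t - 1) with (t * (1 - / t)) by (field; lra).
  rewrite <- Rpower_mult_distr by lra.
  pose proof (Rpower_le_bernoulli (1 - / t) r ltac:(lra) hr).
  pose proof (Rpower_pos t r).
  replace (r * Rpower t r / t) with (- (Rpower t r * (r * (1 - / t - 1)))) by (field; lra).
  nra.
Qed.

Lemma Rpower_INR_cv_infty (r : R) : 0 < r -> cv_infty (fun n => Rpower (INR n + 1) r).
Proof.
  intros hr T.
  destruct (INR_unbounded (Rpower (Rabs T + 1) (/ r))) as [N HN].
  exists N. intros n hn. apply le_INR in hn.
  assert (hT : Rpower (Rpower (Rabs T + 1) (/ r)) r = Rabs T + 1).
  { rewrite Rpower_mult, Rinv_l by lra. apply Rpower_1. pose proof (Rabs_pos T). lra. }
  apply Rlt_le_trans with (Rabs T + 1); [pose proof (Rle_abs T); lra|].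
  rewrite <- hT. apply Rle_Rpower_l; [lra|]. split; [apply Rpower_pos | lra].
Qed.

Lemma Un_cv_const (a : R) : Un_cv (fun _ => a) a.
Proof. intros eps heps. exists O. intros n _. unfold R_dist. rewrite Rminus_diag, Rabs_R0. exact heps. Qed.

Lemma Un_cv_scal_0 (a : R) (u : nat -> R) : Un_cv u 0 -> Un_cv (fun n => a * u n) 0.
Proof. intro hu. rewrite <- (Rmult_0_r a). exact (CV_mult _ _ _ _ (Un_cv_const a) hu). Qed.

Lemma Un_cv_squeeze_0 (u v : nat -> R) : (forall n, 0 <= u n <= v n) -> Un_cv v 0 -> Un_cv u 0.
Proof.
  intros huv hv eps heps. destruct (hv eps heps) as [N HN]. exists N. intros n hn.
  specialize (HN n hn). specialize (huv n). unfold R_dist in *. split_Rabs; lra.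
Qed.

Lemma Un_cv_bounds (u : nat -> R) (l a b : R) (i : nat) :
  Un_cv u l -> (forall j, (i <= j)%nat -> a <= u j <= b) -> a <= l <= b.
Proof.
  intros hu hab. split; apply Rnot_lt_le; intro hlt.
  - destruct (hu (a - l) ltac:(lra)) as [N HN].
    specialize (HN (max N i) ltac:(lia)). specialize (hab (max N i) ltac:(lia)).
    unfold R_dist in HN. split_Rabs; lra.
  - destruct (hu (l - b) ltac:(lra)) as [N HN].
    specialize (HN (max N i) ltac:(lia)). specialize (hab (max N i) ltac:(lia)).
    unfold R_dist in HN. split_Rabs; lra.
Qed.

Lemma Rabs_sum_le_head (f b : nat -> R) (m : nat) :
  (forall j, (m < j)%nat -> Rabs (f j) <= b j) -> (forall j, 0 <= b j) ->
  forall n, (m <= n)%nat -> Rabs (sum_f_R0 f n) <= Rabs (sum_f_R0 f m) + sum_f_R0 b n.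
Proof.
  intros hf hb n hn. induction hn as [|n hn IH].
  - pose proof (cond_pos_sum b m hb). lra.
  - rewrite !tech5. specialize (hf (S n) ltac:(lia)). specialize (hb (S n)).
    split_Rabs; lra.
Qed.

Lemma sum_weighted_null (rho wt : nat -> R) : (forall j, 0 <= wt j) -> Un_cv rho 0 ->
  forall eps, 0 < eps -> exists N C, forall n, (N <= n)%nat ->
    sum_f_R0 (fun j => Rabs (rho j) * wt j) n <= C + eps * sum_f_R0 wt n.
Proof.
  intros hwt hrho eps heps.
  destruct (hrho eps heps) as [N HN].
  exists N, (sum_f_R0 (fun j => Rabs (rho j) * wt j) N).
  intros n hn. induction hn as [|n hn IH].
  - pose proof (cond_pos_sum wt N hwt). nra.
  - rewrite !tech5.
    specialize (HN (S n) ltac:(lia)). unfold R_dist in HN. rewrite Rminus_0_r in HN.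
    specialize (hwt (S n)). nra.
Qed.

Section SlowlyVarying.

Variables (K tau : nat -> R) (m0 : nat).
Hypothesis K_pos : forall m, (m0 <= m)%nat -> 0 < K m.
Hypothesis tau_ge0 : forall m, (m0 <= m)%nat -> 0 <= tau m.
Hypothesis tau_decr : forall m, (m0 <= m)%nat -> tau (S m) <= tau m.
Hypothesis tau_m0 : tau m0 <= / 2.
Hypothesis tau_cv0 : Un_cv tau 0.
Hypothesis K_step : forall m, (m0 <= m)%nat -> Rabs (K (S m) - K m) <= (tau m - tau (S m)) * K (S m).

Lemma tau_le_half m : (m0 <= m)%nat -> tau m <= / 2.
Proof. intro hm. induction hm as [|m hm IH]; [exact tau_m0|]. specialize (tau_decr m hm). lra. Qed.

Lemma slowly_varying_monotone i j : (m0 <= i)%nat -> (i <= j)%nat ->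
  K i * (1 - tau i) <= K j * (1 - tau j) /\ K j * (1 - tau i) <= K i * (1 - tau j).
Proof.
  intros hi hij. induction hij as [|j hij [IH1 IH2]]; [lra|].
  assert (hj : (m0 <= j)%nat) by lia.
  pose proof (K_step j hj) as hstep.
  pose proof (K_pos j hj). pose proof (K_pos (S j) ltac:(lia)). pose proof (K_pos i hi).
  pose proof (tau_ge0 (S j) ltac:(lia)). pose proof (tau_decr j hj).
  pose proof (tau_le_half i hi). pose proof (tau_le_half j hj).
  assert (hi_ge : tau j <= tau i).
  { clear - hi hij tau_decr. induction hij as [|j hij IH]; [lra|]. specialize (tau_decr j ltac:(lia)). lra. }
  assert (K j * (1 - tau j) <= K (S j) * (1 - tau (S j))) by (split_Rabs; nra).
  assert (K (S j) * (1 - tau j) <= K j * (1 - tau (S j))) by (split_Rabs; nra).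
  split; nra.
Qed.

Lemma slowly_varying_close i j : (m0 <= i)%nat -> (i <= j)%nat -> Rabs (K j - K i) <= 2 * tau i * K i.
Proof.
  intros hi hij. destruct (slowly_varying_monotone i j hi hij).
  pose proof (K_pos i hi). pose proof (K_pos j ltac:(lia)).
  pose proof (tau_ge0 i hi). pose proof (tau_ge0 j ltac:(lia)).
  pose proof (tau_le_half i hi). pose proof (tau_le_half j ltac:(lia)).
  assert (hup : K j * (1 - tau i) <= K i) by nra.
  assert (K j <= 2 * K i) by nra.
  apply Rabs_le. split; nra.
Qed.

Lemma slowly_varying_bounded j : (m0 <= j)%nat -> K m0 / 2 <= K j <= 2 * K m0.
Proof.
  intro hj. destruct (slowly_varying_monotone m0 j (le_n m0) hj).
  pose proof (K_pos m0 (le_n m0)). pose proof (K_pos j hj).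
  pose proof (tau_ge0 m0 (le_n m0)). pose proof (tau_ge0 j hj).
  pose proof (tau_le_half j hj).
  split; nra.
Qed.

Lemma slowly_varying_cv : exists k, Un_cv K k.
Proof.
  assert (hK0 : 0 < K m0) by exact (K_pos m0 (le_n m0)).
  assert (hcauchy : Cauchy_crit K).
  { intros eps heps.
    destruct (tau_cv0 (eps / (8 * K m0))) as [N HN].
    { apply Rdiv_lt_0_compat; lra. }
    exists (max N m0). intros n m hn hm.
    set (i := max N m0).
    specialize (HN i ltac:(lia)). unfold R_dist in HN.
    rewrite Rminus_0_r, Rabs_pos_eq in HN by (apply tau_ge0; lia).
    pose proof (slowly_varying_close i n ltac:(lia) ltac:(lia)).
    pose proof (slowly_varying_close i m ltac:(lia) ltac:(lia)).
    pose proof (slowly_varying_bounded i ltac:(lia)).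
    pose proof (tau_ge0 i ltac:(lia)).
    assert (htau : 8 * K m0 * tau i < eps).
    { apply (Rmult_lt_compat_l (8 * K m0)) in HN; [|lra].
      replace (8 * K m0 * (eps / (8 * K m0))) with eps in HN by (field; lra). exact HN. }
    unfold R_dist. split_Rabs; nra. }
  destruct (R_complete K hcauchy) as [k hk]. exists k. exact hk.
Qed.

Lemma slowly_varying_limit k : Un_cv K k ->
  K m0 / 2 <= k <= 2 * K m0 /\ forall i, (m0 <= i)%nat -> Rabs (k - K i) <= 2 * tau i * K i.
Proof.
  intro hk. split.
  - exact (Un_cv_bounds K k _ _ m0 hk slowly_varying_bounded).
  - intros i hi. apply Rabs_le.
    enough (K i - 2 * tau i * K i <= k <= K i + 2 * tau i * K i) by lra.
    apply (Un_cv_bounds K k _ _ i hk). intros j hj.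
    pose proof (slowly_varying_close i j hi hj). split_Rabs; lra.
Qed.

End SlowlyVarying.

Definition delta (g : nat -> R) (n : nat) : R := g (S n) - g n.

Definition sq_pair (g : nat -> R) (n : nat) (w : R) : R :=
  orthpoly g n w ^ 2 + orthpoly g (S n) w ^ 2.

(* The quantity [g_m (p_m^2 + p_(m+1)^2) - w p_m p_(m+1)] is conserved when [g] is
   constant; the last term corrects for the growth of [g]. *)
Definition energy (g : nat -> R) (w : R) (m : nat) : R :=
  g m * sq_pair g m w - w * orthpoly g m w * orthpoly g (S m) w
  + delta g m * orthpoly g (S m) w ^ 2.

Lemma Rabs_mul3_le (a b d : R) : Rabs (a * b * d) <= Rabs a * (b ^ 2 + d ^ 2) / 2.
Proof.
  rewrite !Rabs_mult.
  assert (Rabs b * Rabs d <= (b ^ 2 + d ^ 2) / 2).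
  { pose proof (pow2_ge_0 (Rabs b - Rabs d)).
    rewrite <- (pow2_abs b), <- (pow2_abs d). nra. }
  pose proof (Rabs_pos a). nra.
Qed.

Section OrthogonalPolynomials.

Variable g : nat -> R.
Hypothesis g_pos : forall n, 0 < g n.

Lemma opair_orthpoly w n : opair g w n = (orthpoly g n w, orthpoly g (S n) w).
Proof.
  induction n as [|n IH]; [reflexivity|].
  unfold orthpoly at 2. simpl opair at 2. rewrite IH. simpl.
  unfold orthpoly at 1. simpl. rewrite IH. reflexivity.
Qed.

Lemma orthpoly_0 w : orthpoly g 0 w = 1.
Proof. reflexivity. Qed.

Lemma orthpoly_rec w n :
  g (S n) * orthpoly g (S (S n)) w = w * orthpoly g (S n) w - g n * orthpoly g n w.
Proof.
  unfold orthpoly at 1. simpl opair. rewrite opair_orthpoly. simpl.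
  field. apply Rgt_not_eq, g_pos.
Qed.

Lemma sq_pair_pos w n : 0 < sq_pair g n w.
Proof.
  unfold sq_pair. induction n as [|n IH].
  - rewrite orthpoly_0. pose proof (pow2_ge_0 (orthpoly g 1 w)). lra.
  - pose proof (pow2_ge_0 (orthpoly g (S n) w)). pose proof (pow2_ge_0 (orthpoly g (S (S n)) w)).
    apply Rnot_le_lt. intro hle.
    assert (h1 : orthpoly g (S n) w = 0) by nra.
    assert (h2 : orthpoly g (S (S n)) w = 0) by nra.
    pose proof (orthpoly_rec w n) as hrec. rewrite h1, h2 in hrec.
    assert (orthpoly g n w = 0) by (pose proof (g_pos n); nra).
    rewrite h1 in IH. nra.
Qed.

Lemma sum_sq_pair w n :
  sum_f_R0 (fun j => sq_pair g j w) n = 2 * sqsum g n w - 1 + orthpoly g (S n) w ^ 2.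
Proof.
  unfold sqsum, sq_pair. induction n as [|n IH].
  - simpl. rewrite orthpoly_0. ring.
  - rewrite !tech5, IH. ring.
Qed.

Lemma orthpoly_unif_bounded M n : 0 <= M -> exists B, 0 <= B /\
  forall j w, (j <= S n)%nat -> Rabs w <= M -> Rabs (orthpoly g j w) <= B.
Proof.
  intro hM. induction n as [|n [B [hB HB]]].
  - exists (1 + M / g 0). pose proof (g_pos 0).
    assert (0 <= M / g 0) by (apply Rdiv_nonneg_pos; lra).
    split; [lra|]. intros j w hj hw.
    destruct j as [|[|j]]; [| |lia].
    + rewrite orthpoly_0, Rabs_R1. lra.
    + unfold orthpoly. simpl. unfold Rdiv. rewrite Rabs_mult, (Rabs_pos_eq (/ g 0)).
      * apply Rle_trans with (M * / g 0); [|lra].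
        apply Rmult_le_compat_r; [left; apply Rinv_0_lt_compat|]; lra.
      * left. apply Rinv_0_lt_compat. lra.
  - pose proof (g_pos n). pose proof (g_pos (S n)).
    assert (0 <= (M + g n) * B / g (S n)) by (apply Rdiv_nonneg_pos; nra).
    exists (B + (M + g n) * B / g (S n)). split; [lra|]. intros j w hj hw.
    destruct (Nat.le_gt_cases j (S n)) as [hle|hgt].
    + specialize (HB j w hle hw). lra.
    + replace j with (S (S n)) by lia.
      pose proof (HB n w ltac:(lia) hw). pose proof (HB (S n) w (le_n _) hw).
      pose proof (orthpoly_rec w n) as hrec.
      assert (hmul : g (S n) * Rabs (orthpoly g (S (S n)) w) <= (M + g n) * B).
      { rewrite <- (Rabs_pos_eq (g (S n))), <- Rabs_mult, hrec by lra.
        eapply Rle_trans; [apply Rabs_triang|]. rewrite Rabs_Ropp, !Rabs_mult, (Rabs_pos_eq (g n)) by lra.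
        pose proof (Rabs_pos w). pose proof (Rabs_pos (orthpoly g (S n) w)).
        nra. }
      assert (Rabs (orthpoly g (S (S n)) w) <= (M + g n) * B / g (S n)).
      { apply (Rmult_le_reg_l (g (S n))); [lra|].
        replace (g (S n) * ((M + g n) * B / g (S n))) with ((M + g n) * B) by (field; lra). exact hmul. }
      lra.
Qed.

Lemma energy_succ_sub w m :
  energy g w (S m) - energy g w m =
    (delta g (S m) - delta g m - delta g m ^ 2 / g m) * orthpoly g (S (S m)) w ^ 2
    + (delta g m * w / g m) * orthpoly g (S m) w * orthpoly g (S (S m)) w.
Proof.
  pose proof (g_pos m). pose proof (orthpoly_rec w m) as hrec.
  assert (hm : orthpoly g m w = (w * orthpoly g (S m) w - g (S m) * orthpoly g (S (S m)) w) / g m).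
  { field_simplify_eq; lra. }
  unfold energy, sq_pair, delta. rewrite hm. field. lra.
Qed.

Lemma energy_ge w m : Rabs w <= g m -> 0 <= delta g m -> g m / 2 * sq_pair g m w <= energy g w m.
Proof.
  intros hw hd. unfold energy.
  pose proof (Rabs_mul3_le w (orthpoly g m w) (orthpoly g (S m) w)).
  pose proof (Rle_abs (w * orthpoly g m w * orthpoly g (S m) w)).
  pose proof (pow2_ge_0 (orthpoly g (S m) w)).
  pose proof (sq_pair_pos w m). unfold sq_pair in *. nra.
Qed.

Lemma energy_near w m M : Rabs w <= M -> 0 <= delta g m ->
  Rabs (g m * sq_pair g m w - energy g w m) <= (M / 2 + delta g m) * sq_pair g m w.
Proof.
  intros hw hd. unfold energy.
  pose proof (Rabs_mul3_le w (orthpoly g m w) (orthpoly g (S m) w)).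
  pose proof (pow2_ge_0 (orthpoly g m w)). pose proof (pow2_ge_0 (orthpoly g (S m) w)).
  unfold sq_pair in *. split_Rabs; nra.
Qed.

End OrthogonalPolynomials.

Section RegularCoefficients.

Variable g : nat -> R.
Hypothesis g_pos : forall n, 0 < g n.
Hypothesis delta_ge0 : forall n, 0 <= delta g n.
Hypothesis delta_decr : forall n, delta g (S n) <= delta g n.
Hypothesis delta_cv0 : Un_cv (delta g) 0.
Hypothesis g_cv_infty : cv_infty g.

Lemma g_le m n : (m <= n)%nat -> g m <= g n.
Proof. intro h. induction h as [|n h IH]; [lra|]. pose proof (delta_ge0 n). unfold delta in *. lra. Qed.

Lemma delta_le_0 m : delta g m <= delta g 0.
Proof. induction m as [|m IH]; [lra|]. pose proof (delta_decr m). lra. Qed.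

(* Its decrements [2 (delta m - delta (m+1)) / g 0 + (2 delta 0 + M) (1 / g m - 1 / g (m+1))]
   dominate the relative change of the energy when [|w| <= M <= g m]. *)
Definition energy_rate (M : R) (m : nat) : R :=
  2 * delta g m / g 0 + (2 * delta g 0 + M) / g m.

Lemma energy_rate_ge0 M m : 0 <= M -> 0 <= energy_rate M m.
Proof.
  intro hM. unfold energy_rate. pose proof (delta_ge0 m). pose proof (delta_ge0 0).
  pose proof (Rdiv_nonneg_pos (2 * delta g m) (g 0) ltac:(lra) (g_pos 0)).
  pose proof (Rdiv_nonneg_pos (2 * delta g 0 + M) (g m) ltac:(lra) (g_pos m)).
  lra.
Qed.

Lemma energy_rate_decr M m : 0 <= M -> energy_rate M (S m) <= energy_rate M m.
Proof.
  intro hM. unfold energy_rate.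
  pose proof (delta_decr m). pose proof (delta_ge0 0). pose proof (g_pos 0). pose proof (g_pos m).
  pose proof (g_le m (S m) ltac:(lia)).
  assert (2 * delta g (S m) / g 0 <= 2 * delta g m / g 0).
  { unfold Rdiv. apply Rmult_le_compat_r; [left; apply Rinv_0_lt_compat|]; lra. }
  assert ((2 * delta g 0 + M) / g (S m) <= (2 * delta g 0 + M) / g m).
  { unfold Rdiv. apply Rmult_le_compat_l; [lra|]. apply Rinv_le_contravar; lra. }
  lra.
Qed.

Lemma energy_rate_cv0 M : Un_cv (energy_rate M) 0.
Proof.
  rewrite <- (Rplus_0_r 0).
  apply CV_plus.
  - apply Un_cv_ext with (fun m => 2 / g 0 * delta g m); [intro; unfold Rdiv; ring|].
    exact (Un_cv_scal_0 _ _ delta_cv0).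
  - apply Un_cv_ext with (fun m => (2 * delta g 0 + M) * / g m); [reflexivity|].
    exact (Un_cv_scal_0 _ _ (cv_infty_cv_0 g g_cv_infty)).
Qed.

Lemma energy_succ_sub_le w m M : Rabs w <= M ->
  Rabs (energy g w (S m) - energy g w m)
    <= (delta g m - delta g (S m) + delta g m * (delta g 0 + M / 2) / g m) * sq_pair g (S m) w.
Proof.
  intro hw. rewrite energy_succ_sub by exact g_pos.
  set (b := orthpoly g (S m) w). set (d := orthpoly g (S (S m)) w).
  assert (hP : sq_pair g (S m) w = b ^ 2 + d ^ 2) by reflexivity.
  pose proof (g_pos m). pose proof (delta_ge0 m). pose proof (delta_ge0 (S m)).
  pose proof (delta_decr m). pose proof (delta_le_0 m).
  pose proof (pow2_ge_0 b). pose proof (pow2_ge_0 d).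
  assert (hsq : 0 <= delta g m ^ 2 / g m <= delta g m * delta g 0 / g m).
  { split; [apply Rdiv_nonneg_pos; nra|].
    unfold Rdiv. apply Rmult_le_compat_r; [left; apply Rinv_0_lt_compat; lra | nra]. }
  assert (hcross : Rabs (delta g m * w / g m * b * d) <= delta g m / g m * (M * (b ^ 2 + d ^ 2) / 2)).
  { replace (delta g m * w / g m * b * d) with (delta g m / g m * (w * b * d)) by (field; lra).
    rewrite Rabs_mult, Rabs_pos_eq by (apply Rdiv_nonneg_pos; lra).
    apply Rmult_le_compat_l; [apply Rdiv_nonneg_pos; lra|].
    pose proof (Rabs_mul3_le w b d). pose proof (Rabs_pos w). nra. }
  rewrite hP.
  replace ((delta g m - delta g (S m) + delta g m * (delta g 0 + M / 2) / g m) * (b ^ 2 + d ^ 2))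
    with ((delta g m - delta g (S m) + delta g m * delta g 0 / g m) * (b ^ 2 + d ^ 2)
          + delta g m / g m * (M * (b ^ 2 + d ^ 2) / 2)) by (field; lra).
  eapply Rle_trans; [apply Rabs_triang|]. apply Rplus_le_compat; [|exact hcross].
  rewrite Rabs_mult, (Rabs_pos_eq (d ^ 2)) by lra.
  apply Rmult_le_compat; [apply Rabs_pos | lra | | lra].
  apply Rabs_le. lra.
Qed.

Lemma energy_pos w m : Rabs w <= g m -> 0 < energy g w m.
Proof.
  intro hw. eapply Rlt_le_trans; [|exact (energy_ge g g_pos w m hw (delta_ge0 m))].
  apply Rmult_lt_0_compat; [pose proof (g_pos m); lra | apply sq_pair_pos, g_pos].
Qed.

Lemma energy_step w m M : Rabs w <= M -> M <= g m ->
  Rabs (energy g w (S m) - energy g w m) <= (energy_rate M m - energy_rate M (S m)) * energy g w (S m).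
Proof.
  intros hw hMg.
  pose proof (g_pos 0). pose proof (g_pos m). pose proof (g_pos (S m)).
  pose proof (g_le 0 m ltac:(lia)). pose proof (g_le m (S m) ltac:(lia)).
  pose proof (delta_ge0 0). pose proof (delta_ge0 m). pose proof (delta_decr m).
  pose proof (Rabs_pos w).
  set (X := delta g m - delta g (S m) + delta g m * (delta g 0 + M / 2) / g m).
  assert (hX : 0 <= X).
  { unfold X. pose proof (Rdiv_nonneg_pos (delta g m * (delta g 0 + M / 2)) (g m) ltac:(nra) ltac:(lra)).
    lra. }
  pose proof (energy_ge g g_pos w (S m) ltac:(lra) (delta_ge0 (S m))) as hK.
  pose proof (sq_pair_pos g g_pos w (S m)).
  assert (hdiff : Rabs (energy g w (S m) - energy g w m) <= 2 * X / g (S m) * energy g w (S m)).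
  { eapply Rle_trans; [exact (energy_succ_sub_le w m M hw)|]. fold X.
    replace (2 * X / g (S m) * energy g w (S m)) with (X * (2 * energy g w (S m) / g (S m))) by (field; lra).
    apply Rmult_le_compat_l; [exact hX|].
    apply (Rmult_le_reg_l (g (S m) / 2)); [lra|].
    replace (g (S m) / 2 * (2 * energy g w (S m) / g (S m))) with (energy g w (S m)) by (field; lra).
    exact hK. }
  eapply Rle_trans; [exact hdiff|].
  apply Rmult_le_compat_r; [left; apply energy_pos; lra|].
  assert (hsplit : 2 * X / g (S m) = 2 * (delta g m - delta g (S m)) / g (S m)
     + (2 * delta g 0 + M) * (/ g m - / g (S m))).
  { unfold X, delta. field. lra. }
  assert (2 * (delta g m - delta g (S m)) / g (S m) <= 2 * (delta g m - delta g (S m)) / g 0).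
  { unfold Rdiv. apply Rmult_le_compat_l; [lra|]. apply Rinv_le_contravar; lra. }
  rewrite hsplit. unfold energy_rate, Rdiv in *. lra.
Qed.

Lemma energy_threshold M : exists m0, M <= g m0 /\ energy_rate M m0 <= / 2.
Proof.
  destruct (g_cv_infty M) as [N1 H1].
  destruct (energy_rate_cv0 M (/ 2) ltac:(lra)) as [N2 H2].
  exists (max N1 N2). split.
  - left. apply H1. lia.
  - specialize (H2 (max N1 N2) ltac:(lia)). unfold R_dist in H2. split_Rabs; lra.
Qed.

Lemma energy_converges M m0 w : Rabs w <= M -> M <= g m0 -> energy_rate M m0 <= / 2 ->
  exists k, Un_cv (energy g w) k /\ 0 < energy g w m0 /\
    energy g w m0 / 2 <= k <= 2 * energy g w m0 /\
    forall j, (m0 <= j)%nat -> energy g w j <= 2 * energy g w m0 /\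
      Rabs (k - energy g w j) <= 2 * energy_rate M j * energy g w j.
Proof.
  intros hw hM hrate.
  assert (hM0 : 0 <= M) by (pose proof (Rabs_pos w); lra).
  assert (hpos : forall m, (m0 <= m)%nat -> 0 < energy g w m).
  { intros m hm. apply energy_pos. pose proof (g_le m0 m hm). lra. }
  assert (hrate_ge0 : forall m, (m0 <= m)%nat -> 0 <= energy_rate M m)
    by (intros; apply energy_rate_ge0, hM0).
  assert (hrate_decr : forall m, (m0 <= m)%nat -> energy_rate M (S m) <= energy_rate M m)
    by (intros; apply energy_rate_decr, hM0).
  assert (hstep : forall m, (m0 <= m)%nat -> Rabs (energy g w (S m) - energy g w m)
      <= (energy_rate M m - energy_rate M (S m)) * energy g w (S m)).
  { intros m hm. apply energy_step; [exact hw|]. pose proof (g_le m0 m hm). lra. }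
  pose proof (energy_rate_cv0 M) as hcv0.
  destruct (slowly_varying_cv _ _ _ hpos hrate_ge0 hrate_decr hrate hcv0 hstep) as [k hk].
  destruct (slowly_varying_limit _ _ _ hpos hrate_ge0 hrate_decr hrate hstep k hk) as [hk0 hki].
  exists k. split; [exact hk|]. split; [exact (hpos m0 (le_n m0))|]. split; [exact hk0|].
  intros j hj. split; [|exact (hki j hj)].
  exact (proj2 (slowly_varying_bounded _ _ _ hpos hrate_ge0 hrate_decr hrate hstep j hj)).
Qed.

Definition energy_lim (w : R) : R := epsilon (inhabits 0) (Un_cv (energy g w)).

Lemma energy_lim_cv w : Un_cv (energy g w) (energy_lim w).
Proof.
  apply (epsilon_spec (inhabits 0) (Un_cv (energy g w))).
  destruct (energy_threshold (Rabs w)) as [m0 [hM hrate]].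
  destruct (energy_converges (Rabs w) m0 w (Rle_refl _) hM hrate) as [k [hk _]].
  exists k. exact hk.
Qed.

Lemma energy_lim_estimates M m0 w : Rabs w <= M -> M <= g m0 -> energy_rate M m0 <= / 2 ->
  0 < energy g w m0 /\ energy g w m0 / 2 <= energy_lim w <= 2 * energy g w m0 /\
  forall j, (m0 <= j)%nat -> energy g w j <= 2 * energy g w m0 /\
    Rabs (energy_lim w - energy g w j) <= 2 * energy_rate M j * energy g w j.
Proof.
  intros hw hM hrate.
  destruct (energy_converges M m0 w hw hM hrate) as [k [hk hprops]].
  rewrite (UL_sequence _ _ _ (energy_lim_cv w) hk). exact hprops.
Qed.

Lemma energy_lim_pos w : 0 < energy_lim w.
Proof.
  destruct (energy_threshold (Rabs w)) as [m0 [hM hrate]].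
  destruct (energy_lim_estimates (Rabs w) m0 w (Rle_refl _) hM hrate) as [h0 [[h1 _] _]].
  lra.
Qed.

Lemma energy_unif_bounded M m : 0 <= M -> exists B0, forall w, Rabs w <= M -> energy g w m <= B0.
Proof.
  intro hM. destruct (orthpoly_unif_bounded g g_pos M m hM) as [B [_ HB]].
  exists ((g m + M / 2 + delta g m) * (2 * B ^ 2)).
  intros w hw.
  pose proof (pow_maj_Rabs _ _ 2 (HB m w ltac:(lia) hw)).
  pose proof (pow_maj_Rabs _ _ 2 (HB (S m) w (le_n _) hw)).
  pose proof (energy_near g w m M hw (delta_ge0 m)) as hnear.
  pose proof (g_pos m). pose proof (delta_ge0 m).
  assert (hP : sq_pair g m w <= 2 * B ^ 2) by (unfold sq_pair; lra).
  assert (energy g w m <= (g m + M / 2 + delta g m) * sq_pair g m w) by (split_Rabs; lra).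
  pose proof (sq_pair_pos g g_pos w m).
  apply Rle_trans with ((g m + M / 2 + delta g m) * sq_pair g m w); [assumption|].
  apply Rmult_le_compat_l; lra.
Qed.

Section Threshold.

Variables (M B0 : R) (m0 : nat) (w : R).
Hypothesis hw : Rabs w <= M.
Hypothesis hM : M <= g m0.
Hypothesis hrate : energy_rate M m0 <= / 2.
Hypothesis hB0 : energy g w m0 <= B0.

Lemma energy_lim_le : energy_lim w <= 2 * B0.
Proof. destruct (energy_lim_estimates M m0 w hw hM hrate) as [_ [[_ h] _]]. lra. Qed.

Lemma sq_pair_le j : (m0 <= j)%nat -> sq_pair g j w <= 4 * B0 / g j.
Proof.
  intro hj.
  destruct (energy_lim_estimates M m0 w hw hM hrate) as [_ [_ hK]].
  destruct (hK j hj) as [hKj _].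
  pose proof (g_pos j). pose proof (g_le m0 j hj).
  pose proof (energy_ge g g_pos w j ltac:(lra) (delta_ge0 j)).
  apply (Rmult_le_reg_l (g j / 2)); [lra|].
  replace (g j / 2 * (4 * B0 / g j)) with (2 * B0) by (field; lra). lra.
Qed.

Lemma sq_pair_near_lim j : (m0 <= j)%nat ->
  Rabs (sq_pair g j w - energy_lim w / g j)
    <= 4 * B0 * ((M / 2 + delta g 0) / g j + energy_rate M j) / g j.
Proof.
  intro hj.
  destruct (energy_lim_estimates M m0 w hw hM hrate) as [_ [_ hK]].
  destruct (hK j hj) as [hKj hkj].
  pose proof (g_pos j). pose proof (delta_le_0 j). pose proof (delta_ge0 j).
  pose proof (Rabs_pos w). pose proof (energy_rate_ge0 M j ltac:(lra)).
  pose proof (sq_pair_le j hj) as hP. pose proof (sq_pair_pos g g_pos w j).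
  pose proof (energy_near g w j M hw (delta_ge0 j)) as hnear.
  assert (hgP : Rabs (g j * sq_pair g j w - energy_lim w)
      <= (M / 2 + delta g 0) * (4 * B0 / g j) + 2 * energy_rate M j * (2 * B0)).
  { assert ((M / 2 + delta g j) * sq_pair g j w <= (M / 2 + delta g 0) * (4 * B0 / g j))
      by (apply Rmult_le_compat; lra).
    assert (2 * energy_rate M j * energy g w j <= 2 * energy_rate M j * (2 * B0)) by nra.
    split_Rabs; lra. }
  replace (sq_pair g j w - energy_lim w / g j) with ((g j * sq_pair g j w - energy_lim w) / g j)
    by (field; lra).
  unfold Rdiv at 1. rewrite Rabs_mult, (Rabs_pos_eq (/ g j)) by (left; apply Rinv_0_lt_compat; lra).
  unfold Rdiv. apply Rmult_le_compat_r; [left; apply Rinv_0_lt_compat; lra|].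
  eapply Rle_trans; [exact hgP|]. right. field. lra.
Qed.

End Threshold.

Definition inv_sum (n : nat) : R := sum_f_R0 (fun k => / g k) n.

Lemma sum_sq_pair_sub w k n :
  sum_f_R0 (fun j => sq_pair g j w - k / g j) n
    = 2 * sqsum g n w - k * inv_sum n - 1 + orthpoly g (S n) w ^ 2.
Proof.
  unfold inv_sum. rewrite minus_sum, sum_sq_pair.
  replace (sum_f_R0 (fun j => k / g j) n) with (k * sum_f_R0 (fun j => / g j) n); [ring|].
  rewrite scal_sum. apply sum_eq. intros i _. unfold Rdiv. ring.
Qed.

Theorem sqsum_asymptotics M : 0 <= M -> forall eps, 0 < eps -> exists N C, forall n w,
  (N <= n)%nat -> Rabs w <= M ->
  Rabs (2 * sqsum g n w - energy_lim w * inv_sum n) <= C + eps * inv_sum n.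
Proof.
  intros hM eps heps.
  destruct (energy_threshold M) as [m0 [hMg hrate]].
  destruct (energy_unif_bounded M m0 hM) as [B0 hB0].
  set (rho j := 4 * B0 * ((M / 2 + delta g 0) / g j + energy_rate M j)).
  assert (hrho : Un_cv rho 0).
  { apply Un_cv_scal_0. rewrite <- (Rplus_0_r 0). apply CV_plus; [|apply energy_rate_cv0].
    apply Un_cv_ext with (fun j => (M / 2 + delta g 0) * / g j); [reflexivity|].
    exact (Un_cv_scal_0 _ _ (cv_infty_cv_0 g g_cv_infty)). }
  assert (hinv : forall j, 0 <= / g j) by (intro j; left; apply Rinv_0_lt_compat, g_pos).
  destruct (sum_weighted_null rho (fun j => / g j) hinv hrho eps heps) as [N [C1 HC1]].
  destruct (orthpoly_unif_bounded g g_pos M m0 hM) as [B [_ HB]].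
  set (Bhead := sum_f_R0 (fun j => 2 * B ^ 2 + 2 * B0 / g j) m0).
  exists (max N m0), (Bhead + C1 + 1 + 4 * B0 / g 0). intros n w hn hw.
  pose proof (energy_lim_le M B0 m0 w hw hMg hrate (hB0 w hw)) as hk.
  pose proof (energy_lim_pos w) as hk0.
  set (f j := sq_pair g j w - energy_lim w / g j).
  assert (htail : Rabs (sum_f_R0 f n)
      <= Rabs (sum_f_R0 f m0) + sum_f_R0 (fun j => Rabs (rho j) * / g j) n).
  { apply Rabs_sum_le_head; [|intro j; apply Rmult_le_pos; [apply Rabs_pos | apply hinv] | lia].
    intros j hj. eapply Rle_trans; [exact (sq_pair_near_lim M B0 m0 w hw hMg hrate (hB0 w hw) j ltac:(lia))|].
    apply Rmult_le_compat_r; [apply hinv | apply Rle_abs]. }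
  assert (hhead : Rabs (sum_f_R0 f m0) <= Bhead).
  { eapply Rle_trans; [apply Rsum_abs|]. apply sum_Rle. intros j hj.
    pose proof (pow_maj_Rabs _ _ 2 (HB j w ltac:(lia) hw)).
    pose proof (pow_maj_Rabs _ _ 2 (HB (S j) w ltac:(lia) hw)).
    pose proof (sq_pair_pos g g_pos w j). pose proof (g_pos j).
    assert (0 <= energy_lim w / g j <= 2 * B0 / g j).
    { split; [apply Rdiv_nonneg_pos; lra|]. unfold Rdiv. apply Rmult_le_compat_r; [apply hinv | lra]. }
    unfold f, sq_pair in *. split_Rabs; lra. }
  assert (hlast : orthpoly g (S n) w ^ 2 <= 4 * B0 / g 0).
  { pose proof (sq_pair_le M B0 m0 w hw hMg hrate (hB0 w hw) n ltac:(lia)).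
    pose proof (pow2_ge_0 (orthpoly g n w)). pose proof (g_pos 0). pose proof (g_le 0 n ltac:(lia)).
    assert (4 * B0 / g n <= 4 * B0 / g 0).
    { unfold Rdiv. apply Rmult_le_compat_l; [lra|]. apply Rinv_le_contravar; lra. }
    unfold sq_pair in *. lra. }
  pose proof (HC1 n ltac:(lia)). pose proof (pow2_ge_0 (orthpoly g (S n) w)).
  pose proof (sum_sq_pair_sub w (energy_lim w) n) as hid. fold f in hid.
  fold (inv_sum n) in *. split_Rabs; lra.
Qed.

Lemma energy_lim_unif_bounded M : 0 <= M -> exists B, forall w, Rabs w <= M -> energy_lim w <= B.
Proof.
  intro hM.
  destruct (energy_threshold M) as [m0 [hMg hrate]].
  destruct (energy_unif_bounded M m0 hM) as [B0 hB0].
  exists (2 * B0). intros w hw. exact (energy_lim_le M B0 m0 w hw hMg hrate (hB0 w hw)).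
Qed.

End RegularCoefficients.

Lemma ratio_error_le (A F W S k B C e : R) : 0 < A -> 1 <= F -> 0 <= k <= B ->
  Rabs (A * W - F) <= 1 -> Rabs (2 * S - k * W) <= C + e * W -> 0 <= e ->
  Rabs (S / F - k / (2 * A)) <= (A * C + B) / (2 * A * F) + e / A.
Proof.
  intros hA hF hk hW hS he.
  assert (hWF : W <= 2 * F / A).
  { apply (Rmult_le_reg_l A); [lra|].
    replace (A * (2 * F / A)) with (2 * F) by (field; lra). split_Rabs; lra. }
  assert (hnum : Rabs (A * (2 * S - k * W) + k * (A * W - F)) <= A * C + B + 2 * e * F).
  { eapply Rle_trans; [apply Rabs_triang|]. rewrite !Rabs_mult, (Rabs_pos_eq A), (Rabs_pos_eq k) by lra.
    assert (A * Rabs (2 * S - k * W) <= A * (C + e * W)) by (apply Rmult_le_compat_l; lra).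
    assert (k * Rabs (A * W - F) <= B) by nra.
    assert (A * (e * W) <= 2 * e * F).
    { replace (2 * e * F) with (A * (e * (2 * F / A))) by (field; lra).
      apply Rmult_le_compat_l; [lra|]. apply Rmult_le_compat_l; lra. }
    lra. }
  replace (S / F - k / (2 * A)) with ((A * (2 * S - k * W) + k * (A * W - F)) / (2 * A * F))
    by (field; lra).
  unfold Rdiv at 1. rewrite Rabs_mult, (Rabs_pos_eq (/ (2 * A * F)))
    by (left; apply Rinv_0_lt_compat; nra).
  apply Rle_trans with ((A * C + B + 2 * e * F) * / (2 * A * F)).
  - apply Rmult_le_compat_r; [left; apply Rinv_0_lt_compat; nra | exact hnum].
  - right. field. lra.
Qed.

Lemma INR_succ_plus_1 n : INR (S n) + 1 = INR n + 1 + 1.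
Proof. rewrite S_INR. ring. Qed.

Lemma INR_plus_1_ge1 n : 1 <= INR n + 1.
Proof. pose proof (pos_INR n). lra. Qed.

Section PowerCoefficients.

Variables c p : R.
Hypothesis hc : 0 < c.
Hypothesis hp0 : 0 < p.
Hypothesis hp1 : p < 1.

Lemma gam_pos n : 0 < gam c p n.
Proof. unfold gam. pose proof (Rpower_pos (INR n + 1) p). nra. Qed.

Lemma delta_gam_ge0 n : 0 <= delta (gam c p) n.
Proof.
  unfold delta, gam. rewrite INR_succ_plus_1.
  assert (Rpower (INR n + 1) p <= Rpower (INR n + 1 + 1) p).
  { apply Rle_Rpower_l; [lra|]. pose proof (INR_plus_1_ge1 n). lra. }
  nra.
Qed.

Lemma delta_gam_decr n : delta (gam c p) (S n) <= delta (gam c p) n.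
Proof.
  unfold delta, gam. rewrite (INR_succ_plus_1 (S n)), (INR_succ_plus_1 n).
  set (s := INR n + 1 + 1).
  assert (hs : 1 < s) by (unfold s; pose proof (INR_plus_1_ge1 n); lra).
  replace (INR n + 1) with (s - 1) by (unfold s; ring).
  pose proof (Rpower_succ_sub_le s p ltac:(lra) ltac:(lra)).
  pose proof (Rpower_sub_pred_ge s p hs ltac:(lra)).
  nra.
Qed.

Lemma delta_gam_le n : delta (gam c p) n <= c * p * / Rpower (INR n + 1) (1 - p).
Proof.
  unfold delta, gam. rewrite INR_succ_plus_1.
  set (t := INR n + 1). assert (ht : 1 <= t) by apply INR_plus_1_ge1.
  pose proof (Rpower_succ_sub_le t p ht ltac:(lra)).
  pose proof (Rpower_pos t p).
  rewrite Rpower_one_minus by lra.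
  replace (c * p * / (t / Rpower t p)) with (c * (p * Rpower t p / t)) by (field; lra).
  nra.
Qed.

Lemma delta_gam_cv0 : Un_cv (delta (gam c p)) 0.
Proof.
  apply Un_cv_squeeze_0 with (fun n => c * p * / Rpower (INR n + 1) (1 - p)).
  - intro n. split; [apply delta_gam_ge0 | apply delta_gam_le].
  - apply Un_cv_scal_0, cv_infty_cv_0, Rpower_INR_cv_infty. lra.
Qed.

Lemma gam_cv_infty : cv_infty (gam c p).
Proof.
  intro T. destruct (Rpower_INR_cv_infty p hp0 (T / c)) as [N HN].
  exists N. intros n hn. specialize (HN n hn). unfold gam.
  replace T with (c * (T / c)) by (field; lra). apply Rmult_lt_compat_l; lra.
Qed.

Lemma inv_gam_eq n : c * (1 - p) / gam c p n = (1 - p) * Rpower (INR n + 1) (1 - p) / (INR n + 1).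
Proof.
  unfold gam. pose proof (INR_plus_1_ge1 n). pose proof (Rpower_pos (INR n + 1) p).
  rewrite Rpower_one_minus by lra. field. lra.
Qed.

Lemma inv_sum_gam_le n :
  c * (1 - p) * inv_sum (gam c p) n <= Rpower (INR n + 1) (1 - p) - p.
Proof.
  unfold inv_sum. induction n as [|n IH].
  - simpl sum_f_R0. replace (c * (1 - p) * / gam c p 0) with (c * (1 - p) / gam c p 0) by reflexivity.
    rewrite inv_gam_eq. simpl INR. rewrite Rplus_0_l, Rpower_1_l. lra.
  - rewrite tech5, Rmult_plus_distr_l.
    replace (c * (1 - p) * / gam c p (S n)) with (c * (1 - p) / gam c p (S n)) by reflexivity.
    rewrite inv_gam_eq, INR_succ_plus_1.
    pose proof (Rpower_sub_pred_ge (INR n + 1 + 1) (1 - p)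
      ltac:(pose proof (INR_plus_1_ge1 n); lra) ltac:(lra)).
    replace (INR n + 1 + 1 - 1) with (INR n + 1) in * by ring.
    lra.
Qed.

Lemma inv_sum_gam_ge n :
  Rpower (INR (S n) + 1) (1 - p) - 1 <= c * (1 - p) * inv_sum (gam c p) n.
Proof.
  unfold inv_sum. induction n as [|n IH].
  - simpl sum_f_R0. replace (c * (1 - p) * / gam c p 0) with (c * (1 - p) / gam c p 0) by reflexivity.
    rewrite inv_gam_eq, INR_succ_plus_1. simpl INR. rewrite Rplus_0_l.
    pose proof (Rpower_succ_sub_le 1 (1 - p) ltac:(lra) ltac:(lra)).
    rewrite Rpower_1_l in *. lra.
  - rewrite tech5, Rmult_plus_distr_l.
    replace (c * (1 - p) * / gam c p (S n)) with (c * (1 - p) / gam c p (S n)) by reflexivity.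
    rewrite inv_gam_eq, (INR_succ_plus_1 (S n)).
    pose proof (Rpower_succ_sub_le (INR (S n) + 1) (1 - p) (INR_plus_1_ge1 (S n)) ltac:(lra)).
    lra.
Qed.

Lemma inv_sum_gam_near n :
  Rabs (c * (1 - p) * inv_sum (gam c p) n - Rpower (INR n + 1) (1 - p)) <= 1.
Proof.
  pose proof (inv_sum_gam_le n). pose proof (inv_sum_gam_ge n).
  assert (Rpower (INR n + 1) (1 - p) <= Rpower (INR (S n) + 1) (1 - p)).
  { rewrite INR_succ_plus_1. apply Rle_Rpower_l; [lra|]. pose proof (INR_plus_1_ge1 n). lra. }
  apply Rabs_le. lra.
Qed.

Lemma sqsum_gam_ratio_unif M : 0 <= M -> forall eps, 0 < eps -> exists N, forall n w,
  (N <= n)%nat -> Rabs w <= M ->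
  Rabs (sqsum (gam c p) n w / Rpower (INR n + 1) (1 - p)
        - energy_lim (gam c p) w / (2 * c * (1 - p))) < eps.
Proof.
  intros hM eps heps.
  set (A := c * (1 - p)). assert (hA : 0 < A) by (unfold A; nra).
  destruct (sqsum_asymptotics (gam c p) gam_pos delta_gam_ge0 delta_gam_decr delta_gam_cv0
    gam_cv_infty M hM (eps * A / 4) ltac:(nra)) as [N1 [C HC]].
  destruct (energy_lim_unif_bounded (gam c p) gam_pos delta_gam_ge0 delta_gam_decr delta_gam_cv0
    gam_cv_infty M hM) as [B HB].
  destruct (Rpower_INR_cv_infty (1 - p) ltac:(lra) ((A * C + B) / (A * eps))) as [N2 HN2].
  exists (max N1 N2). intros n w hn hw.
  set (F := Rpower (INR n + 1) (1 - p)).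
  assert (hF1 : 1 <= F).
  { unfold F. rewrite <- (Rpower_1_l (1 - p)) at 1.
    apply Rle_Rpower_l; [lra|]. pose proof (INR_plus_1_ge1 n). lra. }
  assert (hF : (A * C + B) / (A * eps) < F) by (apply HN2; lia).
  pose proof (energy_lim_pos (gam c p) gam_pos delta_gam_ge0 delta_gam_decr delta_gam_cv0
    gam_cv_infty w).
  pose proof (ratio_error_le A F (inv_sum (gam c p) n) (sqsum (gam c p) n w)
    (energy_lim (gam c p) w) B C (eps * A / 4) hA hF1 ltac:(split; [lra | exact (HB w hw)])
    (inv_sum_gam_near n) (HC n w ltac:(lia) hw) ltac:(nra)) as hratio.
  replace (2 * c * (1 - p)) with (2 * A) by (unfold A; ring).
  assert ((A * C + B) / (2 * A * F) < eps / 2).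
  { replace ((A * C + B) / (2 * A * F)) with ((A * C + B) / (A * eps) * (eps / (2 * F)))
      by (field; lra).
    replace (eps / 2) with (F * (eps / (2 * F))) by (field; lra).
    apply Rmult_lt_compat_r; [apply Rdiv_lt_0_compat|]; lra. }
  replace (eps * A / 4 / A) with (eps / 4) in hratio by (field; lra).
  lra.
Qed.

End PowerCoefficients.

Theorem corollary4 (c p : R) (hc : 0 < c) (hp0 : 0 < p) (hp1 : p < 1) :
  exists L : R -> R,
    (forall w : R, 0 < L w) /\
    (forall K : R -> Prop, compact K ->
       forall eps : R, 0 < eps ->
       exists N : nat, forall n : nat, (N <= n)%nat ->
         forall w : R, K w ->
           Rabs (sqsum (gam c p) n w / Rpower (INR n + 1) (1 - p) - L w) < eps).
Proof.
  exists (fun w => energy_lim (gam c p) w / (2 * c * (1 - p))). split.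
  - intro w. apply Rdiv_lt_0_compat; [|nra].
    exact (energy_lim_pos _ (gam_pos c p hc) (delta_gam_ge0 c p hc hp0) (delta_gam_decr c p hc hp0 hp1)
      (delta_gam_cv0 c p hc hp0 hp1) (gam_cv_infty c p hc hp0) w).
  - intros K hK eps heps.
    destruct (compact_P1 K hK) as [a [b hab]].
    destruct (sqsum_gam_ratio_unif c p hc hp0 hp1 (Rabs a + Rabs b)
      ltac:(pose proof (Rabs_pos a); pose proof (Rabs_pos b); lra) eps heps) as [N HN].
    exists N. intros n hn w hw. apply HN; [exact hn|].
    destruct (hab w hw). split_Rabs; lra.
Qed.
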